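(* Let $k$ be a field of characteristic zero, let $q\in k\setminus\{0\}$, and let $f=a/b\in k(x,y)$ with $a,b\in k[x,y]$, $b\neq 0$. Let $d\in k[y]$ be an irreducible polynomial which divides $b$. Then: (i) $\operatorname{res}_{D_y}(\sigma_x(f),d)=\sigma_x(\operatorname{res}_{D_y}(f,d))$; (ii) $\operatorname{res}_{D_y}(\tau_{x,q}(f),d)=\tau_{x,q}(\operatorname{res}_{D_y}(f,d))$; (iii) $\operatorname{res}_{\sigma_y}(\tau_{x,q}(f),d,j)=\tau_{x,q}(\operatorname{res}_{\sigma_y}(f,d,j))$ for all $j\in\mathbb{N}$.
   Context: On $k(x,y)$ define the automorphisms $\sigma_x(f(x,y))=f(x+1,y)$, $\sigma_y(f(x,y))=f(x,y+1)$ and $\tau_{x,q}(f(x,y))=f(qx,y)$. Regard $k(x,y)=K(y)$ with $K=k(x)$. $D_y$-residue: every $f\in K(y)$ can be written uniquely as $f=p+\sum_{i=1}^n\sum_{j=1}^{m_i} a_{i,j}/d_i^j$ with $p,a_{i,j}\in K[y]$, $\deg_y(a_{i,j})<\deg_y(d_i)$, and the $d_i$ distinct monic irreducible polynomials in $K[y]$ (irreducible partial fraction decomposition); $\operatorname{res}_{D_y}(f,d_i):=a_{i,1}$ (and the residue at an irreducible $d$ not among the $d_i$ is $0$). $\sigma_y$-residue: two polynomials $p,p'$ are $\sigma_y$-equivalent if $p=\sigma_y^i(p')$ for some $i\in\mathbb{Z}$. Writing the irreducible partial fraction decomposition of $f$ with respect to $y$ over $K$ and grouping the terms whose denominators are powers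 of elements of the $\sigma_y$-orbit of the irreducible $d$, one gets uniquely $f=\sum_{j}\sum_{\ell} a_{j,\ell}/\sigma_y^{\ell}(d)^j+R$, where $a_{j,\ell}\in K[y]$, $\deg_y(a_{j,\ell})<\deg_y(d)$, and $R$ has no irreducible factor $\sigma_y$-equivalent to $d$ in its denominator. Then $\operatorname{res}_{\sigma_y}(f,d,j):=\sum_{\ell}\sigma_y^{-\ell}(a_{j,\ell})$, the $\sigma_y$-residue of $f$ at $d$ of multiplicity $j$. *)

From HB Require Import structures.
From mathcomp Require Import all_boot all_order all_algebra.
From Stdlib Require Import ClassicalEpsilon.
Set Implicit Arguments. Unset Strict Implicit. Unset Printing Implicit Defensive.
Import Order.TTheory GRing.Theory Num.Theory.
Local Open Scope ring_scope.

Notation "x %:F" := (@FracField.tofrac _ x) : ring_scope.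

(* K = k(x) and k(x,y) = K(y). Polynomials {poly {poly k}} are k[x,y],
   outer variable y, inner variable x. *)
Definition KK (k : fieldType) := {fraction {poly k}}.
Definition FF (k : fieldType) := {fraction {poly KK k}}.

Definition frac_map (R : idomainType) (g : R -> R) (u : {fraction R})
  : {fraction R} :=
  let r := repr u in (g (frac r).1)%:F / (g (frac r).2)%:F.

Definition sigx_K (k : fieldType) : KK k -> KK k :=
  frac_map (fun p : {poly k} => p \Po ('X + 1)).
Definition taux_K (k : fieldType) (q : k) : KK k -> KK k :=
  frac_map (fun p : {poly k} => p \Po (q *: 'X)).

Definition sigx_Ky (k : fieldType) (p : {poly KK k}) : {poly KK k} :=
  map_poly (@sigx_K k) p.
Definition taux_Ky (k : fieldType) (q : k) (p : {poly KK k}) : {poly KK k} :=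
  map_poly (taux_K q) p.

Definition sigx (k : fieldType) : FF k -> FF k := frac_map (@sigx_Ky k).
Definition taux (k : fieldType) (q : k) : FF k -> FF k := frac_map (taux_Ky q).

Definition sigy_pow (k : fieldType) (l : int) (p : {poly KK k}) : {poly KK k} :=
  p \Po ('X + (l%:~R)%:P).

Definition kxy_to_F (k : fieldType) (a : {poly {poly k}}) : FF k :=
  (map_poly (fun c : {poly k} => c%:F) a)%:F.
Definition ky_to_Ky (k : fieldType) (d : {poly k}) : {poly KK k} :=
  map_poly (fun c : k => (c%:P)%:F) d.
Definition ky_to_kxy (k : fieldType) (d : {poly k}) : {poly {poly k}} :=
  map_poly polyC d.

(* Irreducible partial fraction decomposition of f in K(y):
   f = p + \sum_{(d_i, [a_{i,1}; ...; a_{i,m_i}]) in D} \sum_j a_{i,j} / d_i^j,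
   with the d_i distinct monic irreducible and deg a_{i,j} < deg d_i. *)
Definition is_pfd (k : fieldType) (f : FF k) (p : {poly KK k})
    (D : seq ({poly KK k} * seq {poly KK k})) : Prop :=
  [/\ uniq (map fst D),
      (forall e, e \in D -> e.1 \is monic /\ irreducible_poly e.1),
      (forall e, e \in D -> forall a, a \in e.2 -> (size a < size e.1)%N) &
      f = p%:F + \sum_(e <- D) \sum_(j < size e.2)
                   (e.2`_j)%:F / (e.1 ^+ j.+1)%:F ].

(* a chosen decomposition (it exists, and the residues do not depend on the
   choice) *)
Definition pfd (k : fieldType) (f : FF k)
  : {poly KK k} * seq ({poly KK k} * seq {poly KK k}) :=
  epsilon (inhabits (0, [::])) (fun pD => is_pfd f pD.1 pD.2).

Definition monicize (k : fieldType) (d : {poly KK k}) : {poly KK k} :=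
  (lead_coef d)^-1 *: d.

(* D_y-residue of f at the irreducible d (taken up to normalization of d) *)
Definition res_Dy (k : fieldType) (f : FF k) (d : {poly KK k}) : {poly KK k} :=
  \sum_(e <- (pfd f).2 | e.1 == monicize d) e.2`_0.

(* sigma_y-residue of f at d of multiplicity j (j >= 1; defined as 0 for j = 0):
   sum over the denominators d_i = sigma_y^l (d) of sigma_y^{-l}(a_{i,j}) *)
Definition res_sigy (k : fieldType) (f : FF k) (d : {poly KK k}) (j : nat)
  : {poly KK k} :=
  if j == 0%N then 0 else
  \sum_(e <- (pfd f).2)
     let l := epsilon (inhabits 0%Z)
                (fun l : int => e.1 = sigy_pow l (monicize d)) in
     if e.1 == sigy_pow l (monicize d) then sigy_pow (- l) (e.2`_(j.-1)) else 0.

(* sigma_x and tau_{x,q} are automorphisms of K = k(x) fixing k.  Acting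
   coefficientwise on K[y] they preserve monicity, irreducibility and degrees,
   so they carry an irreducible partial fraction decomposition of f to one of
   the image of f; by uniqueness of such decompositions, the numerator of
   1/u^j in the image is the image of the numerator of 1/u^j in f.  The
   polynomial d has coefficients in k, hence is fixed, and the automorphisms
   commute with sigma_y, so they commute with both residues.  As [pfd] is
   defined by choice, existence of decompositions is needed as well.  Neither
   char k = 0 nor the hypotheses on d and b play a role. *)

From HB Require Import structures.
From mathcomp Require Import all_boot all_order all_algebra.
From Stdlib Require Import ClassicalEpsilon Classical.
From Stdlib Require Import FunctionalExtensionality PropExtensionality.
From mathcomp Require Import ring.
Set Implicit Arguments. Unset Strict Implicit. Unset Printing Implicit Defensive.
Import GRing.Theory.
Local Open Scope ring_scope.

(** * Fractions and injective ring morphisms *)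

Lemma fracE (R : idomainType) (u : {fraction R}) :
  u = (\n_(repr u))%:F / (\d_(repr u))%:F.
Proof.
rewrite -{1}[u]reprK; set x := repr u.
have dx : \d_x != 0 := denom_ratioP x.
have dx0 : (\d_x)%:F != 0 :> {fraction R} by rewrite tofrac_eq0.
apply: (canRL (mulfK dx0)); unlock FracField.tofrac.
apply: etrans (esym (FracField.pi_mul x (Ratio \d_x 1))) _; apply/eqmodP => /=.
rewrite FracField.equivfE /FracField.mulf /=.
by rewrite !numden_Ratio ?oner_neq0 ?mulr1 // mulrC.
Qed.

Lemma fracP (R : idomainType) (u : {fraction R}) :
  exists n d, d != 0 /\ u = n%:F / d%:F.
Proof. by exists \n_(repr u), \d_(repr u); rewrite denom_ratioP -fracE. Qed.

Section FracMap.
Variables (R : idomainType) (g : {rmorphism R -> R}).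
Hypothesis g_inj : injective g.

Lemma inj_rmorph_neq0 x : x != 0 -> g x != 0.
Proof. by rewrite -{2}(rmorph0 g) (inj_eq g_inj). Qed.

Lemma frac_map_frac n d : d != 0 ->
  frac_map g (n%:F / d%:F) = (g n)%:F / (g d)%:F.
Proof.
move=> d0; rewrite /frac_map; set u := n%:F / d%:F.
have := fracE u; set n' := \n_(repr u); set d' := \d_(repr u) => /eqP.
rewrite {1}/u eqr_div ?tofrac_eq0 ?denom_ratioP //.
rewrite -!rmorphM tofrac_eq => /eqP E.
apply/eqP; rewrite eqr_div ?tofrac_eq0 ?inj_rmorph_neq0 ?denom_ratioP //.
by rewrite -!tofracM tofrac_eq -!rmorphM E.
Qed.

Lemma frac_map_tofrac x : frac_map g x%:F = (g x)%:F.
Proof. by have := frac_map_frac x (oner_neq0 R); rewrite !rmorph1 !divr1. Qed.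

Lemma frac_map_is_zmod_morphism : zmod_morphism (frac_map g).
Proof.
have subf_div (a b a' b' : R) : b != 0 -> b' != 0 ->
    a%:F / b%:F - a'%:F / b'%:F = (a * b' - a' * b)%:F / (b * b')%:F.
  move=> b0 b'0; rewrite -mulNr addf_div ?tofrac_eq0 //.
  by rewrite mulNr -!rmorphM -rmorphB.
move=> u v; have [n [d [d0 ->]]] := fracP u; have [n' [d' [d'0 ->]]] := fracP v.
rewrite subf_div // !frac_map_frac ?mulf_neq0 // subf_div ?inj_rmorph_neq0 //.
by rewrite rmorphB !rmorphM.
Qed.

Lemma frac_map_is_monoid_morphism : monoid_morphism (frac_map g).
Proof.
split=> [|u v]; first by rewrite frac_map_tofrac rmorph1.
have [n [d [d0 ->]]] := fracP u; have [n' [d' [d'0 ->]]] := fracP v.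
rewrite mulf_div -!rmorphM !frac_map_frac ?mulf_neq0 //.
by rewrite !rmorphM mulf_div.
Qed.

Definition frac_rmorph : {rmorphism {fraction R} -> {fraction R}} :=
  HB.pack (frac_map g)
    (GRing.isZmodMorphism.Build _ _ _ frac_map_is_zmod_morphism)
    (GRing.isMonoidMorphism.Build _ _ _ frac_map_is_monoid_morphism).

End FracMap.

Lemma frac_map_can (R : idomainType) (g g' : {rmorphism R -> R}) :
  injective g -> injective g' -> cancel g g' ->
  cancel (frac_map g) (frac_map g').
Proof.
move=> g_inj g'_inj gK u; have [n [d [d0 ->]]] := fracP u.
by rewrite frac_map_frac // frac_map_frac ?inj_rmorph_neq0 // !gK.
Qed.

(** * Partial fraction decompositions *)

Lemma sum_frac_common_den (R : idomainType) (I : eqType) (r : seq I)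
    (G : I -> {fraction R}) (d : I -> R) :
  (forall i, i \in r -> d i != 0 /\ exists n, G i = n%:F / (d i)%:F) ->
  exists n, \sum_(i <- r) G i = n%:F / (\prod_(i <- r) d i)%:F.
Proof.
elim: r => [|i r IH] hG; first by exists 0; rewrite !big_nil rmorph0 mul0r.
rewrite !big_cons; have [di0 [n ->]] := hG i (mem_head i r).
have hG_r j : j \in r -> d j != 0 /\ exists n, G j = n%:F / (d j)%:F.
  by move=> jr; apply: hG; rewrite in_cons jr orbT.
have [m ->] := IH hG_r.
have r0 : \prod_(j <- r) d j != 0.
  by rewrite prodf_seq_neq0; apply/allP => j /hG_r[].
exists (n * \prod_(j <- r) d j + m * d i).
by rewrite addf_div ?tofrac_eq0 // -!rmorphM -rmorphD.
Qed.

Lemma divf_bezout (K : fieldType) (n x y a b : K) : a != 0 -> b != 0 ->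
  x * a + y * b = 1 -> n / (a * b) = n * x / b + n * y / a.
Proof.
by move=> a0 b0 xy1; rewrite -[n in LHS]mulr1 -xy1; field; rewrite a0 b0.
Qed.

Lemma sum_partition_keys (I J : eqType) (V : zmodType) (r : seq I) (U : seq J)
    (key : I -> J) (G : I -> V) :
  uniq U -> (forall i, i \in r -> key i \in U) ->
  \sum_(i <- r) G i = \sum_(u <- U) \sum_(i <- r | key i == u) G i.
Proof.
move=> uU keyU; under [RHS]eq_bigr do rewrite big_mkcond.
rewrite exchange_big; apply: eq_big_seq => i ir /=.
rewrite -big_mkcond (big_rem (key i)) ?keyU //= eqxx big1_seq ?addr0 //.
by move=> u /andP[/eqP <-]; rewrite mem_rem_uniqF.
Qed.

Lemma nth_map_additive (V W : zmodType) (f : {additive V -> W}) (s : seq V) j :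
  (map f s)`_j = f s`_j.
Proof.
have [js|sj] := ltnP j (size s); first exact: nth_map.
by rewrite !nth_default ?size_map // raddf0.
Qed.

Section PartialFractions.
Variable F : fieldType.
Local Notation P := {poly F}.
Local Notation FR := {fraction {poly F}}.
Implicit Types (D : seq (P * seq P)) (p q u g m n w : P).

(* The sum of [is_pfd]: an entry (u, [:: a_1; ...; a_m]) stands for
   a_1/u + ... + a_m/u^m.  Denominators may repeat in D. *)
Definition pf_sum D : FR :=
  \sum_(e <- D) \sum_(j < size e.2) (e.2`_j)%:F / (e.1 ^+ j.+1)%:F.

Definition pf_coef D u j : P := \sum_(e <- D | e.1 == u) e.2`_j.

Definition pf_wf D := forall e, e \in D ->
  [/\ e.1 \is monic, irreducible_poly e.1 &
      forall a, a \in e.2 -> (size a < size e.1)%N].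

Lemma pf_sum_cat D1 D2 : pf_sum (D1 ++ D2) = pf_sum D1 + pf_sum D2.
Proof. exact: big_cat. Qed.

Lemma pf_coef_small D u j : pf_wf D -> (0 < size u)%N ->
  (size (pf_coef D u j) < size u)%N.
Proof.
move=> wfD u_gt0; rewrite /pf_coef big_seq_cond.
apply: (big_ind (fun a : P => size a < size u)%N).
- by rewrite size_poly0.
- move=> a b ha hb.
  by apply: leq_ltn_trans (size_polyD a b) _; rewrite gtn_max ha hb.
- move=> e /andP[eD /eqP eu]; have [_ _ small_e] := wfD e eD; rewrite -eu.
  have [je|ej] := ltnP j (size e.2); first by rewrite small_e ?mem_nth.
  by rewrite nth_default // size_poly0 eu.
Qed.

Lemma pf_sum_at D u N : (forall e, e \in D -> e.1 == u -> size e.2 <= N)%N ->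
  \sum_(e <- D | e.1 == u) \sum_(j < size e.2) (e.2`_j)%:F / (e.1 ^+ j.+1)%:F
  = \sum_(j < N) (pf_coef D u j)%:F / (u ^+ j.+1)%:F :> FR.
Proof.
move=> le_N; rewrite big_seq_cond.
rewrite (eq_bigr (fun e => \sum_(j < N) (e.2`_j)%:F / (u ^+ j.+1)%:F)).
  rewrite exchange_big; apply: eq_bigr => j _.
  by rewrite /pf_coef rmorph_sum mulr_suml -big_seq_cond.
move=> e /andP[eD eu]; rewrite -(eqP eu).
rewrite (big_ord_widen _ (fun j => (e.2`_j)%:F / (e.1 ^+ j.+1)%:F)
                       (le_N e eD eu)).
rewrite big_mkcond; apply: eq_bigr => j _.
by case: ltnP => // je; rewrite nth_default // rmorph0 mul0r.
Qed.

Lemma sum_frac_exp u (C : nat -> P) (n : nat) : u != 0 ->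
  \sum_(i < n) (C i)%:F / (u ^+ i.+1)%:F =
  (\sum_(i < n) C i * u ^+ (n - i.+1))%:F / (u ^+ n)%:F :> FR.
Proof.
move=> u0; rewrite rmorph_sum mulr_suml; apply: eq_bigr => i _.
rewrite -[in u ^+ n](subnKC (ltn_ord i)) exprD !rmorphM /= invfM.
by rewrite mulrACA mulfV ?mulr1 // tofrac_eq0 expf_neq0.
Qed.

Lemma dvdp_adic_eq0 u (n : nat) (C : nat -> P) : u != 0 ->
  (forall i, size (C i) < size u)%N ->
  u ^+ n %| \sum_(i < n) C i * u ^+ (n - i.+1) ->
  forall i, (i < n)%N -> C i = 0.
Proof.
move=> u0 C_small; elim: n => [//|n IH].
rewrite big_ord_recr /= subnn expr0 mulr1.
have -> : \sum_(i < n) C i * u ^+ (n.+1 - i.+1) =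
          (\sum_(i < n) C i * u ^+ (n - i.+1)) * u.
  rewrite mulr_suml; apply: eq_bigr => i _.
  by rewrite -mulrA -exprSr subSS subnSK.
set S := \sum_(i < n) _ => dvd_u.
have Cn0 : C n = 0.
  have : u %| S * u + C n by apply: dvdp_trans dvd_u; rewrite exprS dvdp_mulr.
  rewrite dvdp_addr ?dvdp_mull // => u_Cn; apply/eqP/contraT => Cn0.
  by have := dvdp_leq Cn0 u_Cn; rewrite leqNgt C_small.
move: dvd_u; rewrite Cn0 addr0 exprSr dvdp_mul2r // => /IH C0 i.
by rewrite ltnS leq_eqVlt => /predU1P[-> //|]; apply: C0.
Qed.

Lemma coprimep_monic_irredp u v : u \is monic -> irreducible_poly u ->
  v \is monic -> irreducible_poly v -> u != v -> coprimep u v.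
Proof.
move=> um ui vm vi uv; rewrite irreducible_poly_coprime //; apply/negP => udv.
have : u %= v by apply: vi => //; rewrite neq_ltn ui.1 orbT.
by rewrite eqp_monic // (negbTE uv).
Qed.

Lemma pf_sum_split D u N : pf_wf D -> u \is monic -> irreducible_poly u ->
  (forall e, e \in D -> size e.2 <= N)%N ->
  exists R Q, [/\ Q != 0, coprimep u Q &
    let A := \sum_(i < N) pf_coef D u i * u ^+ (N - i.+1) in
    pf_sum D = (A * Q + R * u ^+ N)%:F / (u ^+ N * Q)%:F].
Proof.
move=> wfD um ui le_N; set D' := [seq e <- D | e.1 != u].
have wfD' e : e \in D' -> [/\ e \in D, e.1 != u & e.1 != 0].
  rewrite mem_filter => /andP[eu eD]; have [_ ei _] := wfD e eD.
  by rewrite eu eD irredp_neq0.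
set Q := \prod_(e <- D') e.1 ^+ size e.2.
have Q0 : Q != 0.
  by rewrite prodf_seq_neq0; apply/allP => e /wfD'[_ _ e0]; rewrite expf_neq0.
have [R hR] : exists R, \sum_(e <- D') \sum_(j < size e.2)
    (e.2`_j)%:F / (e.1 ^+ j.+1)%:F = R%:F / Q%:F.
  apply: sum_frac_common_den => e /wfD'[_ _ e0].
  by rewrite expf_neq0 //; split; [|eexists; apply: sum_frac_exp].
exists R, Q; split=> //.
- rewrite /Q big_seq; apply: (big_ind (coprimep u)) => [|x y|e /wfD'[eD eu _]].
  + exact: coprimep1.
  + by rewrite coprimepMr => -> ->.
  + have [em ei _] := wfD e eD.
    by apply/coprimep_expr/coprimep_monic_irredp; rewrite // eq_sym.
- rewrite /pf_sum (bigID (fun e => e.1 == u)) /= (@pf_sum_at _ _ N); last first.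
    by move=> e eD _; apply: le_N.
  have uN0 : u ^+ N != 0 by rewrite expf_neq0 ?irredp_neq0.
  rewrite sum_frac_exp ?irredp_neq0 // -big_filter hR.
  by rewrite addf_div ?tofrac_eq0 // -!rmorphM -rmorphD.
Qed.

(* Clearing denominators, u^N divides A Q with Q coprime to u, so u^N divides
   A, and the u-adic digits pf_coef D u i of A all vanish. *)
Lemma pf_coef_eq0 D p : pf_wf D -> p%:F + pf_sum D = 0 ->
  forall u j, pf_coef D u j = 0.
Proof.
move=> wfD sum0 u j.
have [/hasP[e eD /eqP eu]|no_u] := boolP (has (fun e => e.1 == u) D);
  last by rewrite /pf_coef big_hasC.
have [um ui _] := wfD e eD; rewrite eu in um ui.
set N := \sum_(e <- D) size e.2.
have le_N e' : e' \in D -> (size e'.2 <= N)%N.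
  by move=> e'D; rewrite /N (big_rem e' e'D) leq_addr.
have [R [Q [Q0 uQ /= split]]] := pf_sum_split wfD um ui le_N.
set A := \sum_(i < N) _ in split.
have uN0 : u ^+ N != 0 by rewrite expf_neq0 ?irredp_neq0.
have num0 : p * (u ^+ N * Q) + (A * Q + R * u ^+ N) = 0.
  have den0 : (u ^+ N * Q)%:F != 0 :> FR by rewrite tofrac_eq0 mulf_neq0.
  have := congr1 ( *%R^~ (u ^+ N * Q)%:F) sum0.
  rewrite mul0r split mulrDl mulfVK // -rmorphM -rmorphD => /eqP.
  by rewrite tofrac_eq0 => /eqP.
have uN_AQ : u ^+ N %| A * Q.
  have -> : A * Q = - (p * Q + R) * u ^+ N by rewrite -[A * Q]subr0 -num0; ring.
  exact: dvdp_mull.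
have uN_A : u ^+ N %| A by rewrite -(Gauss_dvdpl _ (coprimep_expl N uQ)).
have C_small i : (size (pf_coef D u i) < size u)%N.
  by apply: pf_coef_small; rewrite // ltnW ?ui.1.
have [jN|Nj] := ltnP j N.
  exact: dvdp_adic_eq0 (irredp_neq0 ui) C_small uN_A j jN.
rewrite /pf_coef big1_seq // => e' /andP[_ e'D].
by rewrite nth_default // (leq_trans (le_N e' e'D)).
Qed.

Definition pf_decomposable (x : FR) :=
  exists p D, pf_wf D /\ x = p%:F + pf_sum D.

Lemma pf_decomposableD x y :
  pf_decomposable x -> pf_decomposable y -> pf_decomposable (x + y).
Proof.
move=> [p [D [wfD ->]]] [p' [D' [wfD' ->]]]; exists (p + p'), (D ++ D'); split.
  by move=> e; rewrite mem_cat => /orP[/wfD|/wfD'].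
by rewrite pf_sum_cat rmorphD addrACA.
Qed.

Lemma pf_sum_single g k a :
  pf_sum [:: (g, ncons k 0 [:: a])] = a%:F / (g ^+ k.+1)%:F.
Proof.
rewrite /pf_sum big_seq1 /= size_ncons addn1 big_ord_recr /= big1 ?add0r.
  by rewrite nth_ncons ltnn subnn.
by move=> i _; rewrite nth_ncons ltn_ord rmorph0 mul0r.
Qed.

Lemma pf_decomposable_exp g k w : g \is monic -> irreducible_poly g ->
  pf_decomposable (w%:F / (g ^+ k)%:F).
Proof.
move=> gm gi; elim: k w => [|k IH] w.
  exists w, [::]; split=> //.
  by rewrite expr0 rmorph1 divr1 /pf_sum big_nil addr0.
have [g0 gk0] : g%:F != 0 :> FR /\ (g ^+ k)%:F != 0 :> FR.
  by rewrite !tofrac_eq0 expf_neq0 irredp_neq0.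
have -> : w%:F / (g ^+ k.+1)%:F =
          (w %/ g)%:F / (g ^+ k)%:F + (w %% g)%:F / (g ^+ k.+1)%:F :> FR.
  rewrite [in LHS](divp_eq w g) exprSr rmorphD mulrDl !rmorphM /=.
  by rewrite invfM mulrA [_ * g%:F / _]mulrAC (mulfK g0).
apply: pf_decomposableD; first exact: IH.
exists 0, [:: (g, ncons k 0 [:: w %% g])]; rewrite pf_sum_single rmorph0 add0r.
split=> // e; rewrite mem_seq1 => /eqP -> /=; split=> // a.
rewrite -cat_nseq mem_cat mem_nseq mem_seq1 => /orP[/andP[_ /eqP ->]|/eqP ->].
  by rewrite size_poly0 ltnW ?gi.1.
by rewrite ltn_modpN0 ?irredp_neq0.
Qed.

Lemma irredp_eqp p q : p %= q -> irreducible_poly p -> irreducible_poly q.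
Proof.
move=> pq [p_gt1 p_irr]; split=> [|r r1 rq]; first by rewrite -(eqp_size pq).
rewrite -(eqp_dvdr _ pq) in rq; exact: eqp_trans (p_irr r r1 rq) pq.
Qed.

Lemma monic_irreducible_factor m : (1 < size m)%N ->
  exists g, [/\ g \is monic, irreducible_poly g & g %| m].
Proof.
have [n] := ubnP (size m); elim: n m => // n IH m /ltnSE le_mn m_gt1.
have m0 : m != 0 by rewrite -size_poly_gt0 ltnW.
have [[q [q1 qm qNm]]|no_q] :=
  classic (exists q, [/\ size q != 1, q %| m & ~~ (q %= m)]).
  have q0 : q != 0 by apply: contraNneq m0 => q0; rewrite -dvd0p -q0.
  have lt_qm : (size q < size m)%N.
    by rewrite ltn_neqAle dvdp_leq // andbT dvdp_size_eqp.
  have [|g [gm gi gq]] := IH q (leq_trans lt_qm le_mn).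
    by rewrite ltn_neqAle eq_sym q1 size_poly_gt0.
  by exists g; split=> //; apply: dvdp_trans qm.
have m_irr : irreducible_poly m.
  split=> // q q1 qm; apply/negPn/negP => qNm; apply: no_q; exists q.
  by split.
have lc0 : lead_coef m != 0 by rewrite lead_coef_eq0.
have m_eqp : (lead_coef m)^-1 *: m %= m by rewrite eqp_scale ?invr_eq0.
exists ((lead_coef m)^-1 *: m); split.
- by rewrite monicE lead_coefZ mulVf.
- by apply: irredp_eqp m_irr; rewrite eqp_sym.
- by rewrite (eqp_dvdl _ m_eqp).
Qed.

Lemma irredp_exp_split g m : irreducible_poly g -> m != 0 ->
  exists k m', m = g ^+ k * m' /\ ~~ (g %| m').
Proof.
move=> gi; have g0 := irredp_neq0 gi.
have [n] := ubnP (size m); elim: n m => // n IH m /ltnSE le_mn m0.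
have [gm|gNm] := boolP (g %| m); last by exists 0%N, m; rewrite expr0 mul1r.
have mE := divpK gm.
have q0 : m %/ g != 0 by apply: contraNneq m0 => q0; rewrite -mE q0 mul0r.
have lt_qm : (size (m %/ g)%R < size m)%N.
  rewrite size_divp // ltn_subrL size_poly_gt0 m0 andbT -subn1 subn_gt0.
  exact: gi.1.
have [k [m' [qE gNm']]] := IH _ (leq_trans lt_qm le_mn) q0.
by exists k.+1, m'; rewrite -mE qE exprSr mulrAC.
Qed.

Lemma pf_decomposable_frac n m : m != 0 -> pf_decomposable (n%:F / m%:F).
Proof.
have [N] := ubnP (size m); elim: N m n => // N IH m n /ltnSE le_mN m0.
have [/eqP/size_poly1P[c c0 ->]|m_neq1] := eqVneq (size m) 1%N.
  exists (n * (c^-1)%:P), [::]; split=> //; rewrite /pf_sum big_nil addr0.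
  have cF : (c%:P)%:F != 0 :> FR by rewrite tofrac_eq0 polyC_eq0.
  apply: (mulIf cF); rewrite (mulfVK cF) -rmorphM -mulrA -polyCM mulVf //.
  by rewrite mulr1.
have m_gt1 : (1 < size m)%N by rewrite ltn_neqAle eq_sym m_neq1 size_poly_gt0.
have [g [gm gi gdm]] := monic_irreducible_factor m_gt1.
have [k [m' [mE gNm']]] := irredp_exp_split gi m0.
have m'0 : m' != 0 by apply: contraNneq m0 => m'0; rewrite mE m'0 mulr0.
have m'm : m' %| m by rewrite mE dvdp_mull.
have lt_m'm : (size m' < size m)%N.
  rewrite ltn_neqAle dvdp_leq // andbT dvdp_size_eqp //.
  by apply: contra gNm' => /eqp_dvdr ->.
have /Bezout_eq1_coprimepP[[x y] /= xy1] : coprimep (g ^+ k) m'.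
  by rewrite coprimep_expl // irreducible_poly_coprime.
have [gk0 m'F] : (g ^+ k)%:F != 0 :> FR /\ m'%:F != 0 :> FR.
  by split; rewrite tofrac_eq0 // expf_neq0 ?irredp_neq0.
have xy1F : x%:F * (g ^+ k)%:F + y%:F * m'%:F = 1 :> FR.
  by rewrite -!rmorphM -rmorphD xy1 rmorph1.
rewrite mE rmorphM (divf_bezout _ gk0 m'F xy1F) -!rmorphM.
apply: pf_decomposableD; last exact: pf_decomposable_exp.
exact: IH (leq_trans lt_m'm le_mN) m'0.
Qed.

Lemma pf_merge D : pf_wf D ->
  exists2 D', uniq (map fst D') & pf_wf D' /\ pf_sum D' = pf_sum D.
Proof.
move=> wfD; set N := \sum_(e <- D) size e.2; set U := undup (map fst D).
have le_N e : e \in D -> (size e.2 <= N)%N.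
  by move=> eD; rewrite /N (big_rem e eD) leq_addr.
exists [seq (u, mkseq (pf_coef D u) N) | u <- U].
  by rewrite -map_comp map_id_in ?undup_uniq.
split.
  move=> _ /mapP[u + ->]; rewrite mem_undup => /mapP[e eD ->].
  have [em ei _] := wfD e eD; split=> // _ /mapP[j _ ->].
  by rewrite pf_coef_small // ltnW ?ei.1.
rewrite /pf_sum big_map (@sum_partition_keys _ _ _ D U fst) ?undup_uniq //.
  apply: eq_bigr => u _; rewrite (@pf_sum_at _ _ N) ?size_mkseq.
    by apply: eq_bigr => j _; rewrite nth_mkseq.
  by move=> e eD _; apply: le_N.
by move=> e eD; rewrite mem_undup map_f.
Qed.

Lemma pf_exists (x : FR) :
  exists p D, [/\ uniq (map fst D), pf_wf D & x = p%:F + pf_sum D].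
Proof.
have [n [m [m0 ->]]] := fracP x.
have [p [D [wfD ->]]] := pf_decomposable_frac n m0.
by have [D' uD' [wfD' <-]] := pf_merge wfD; exists p, D'.
Qed.

Definition pf_opp D := [seq (e.1, map -%R e.2) | e <- D].

Lemma pf_wf_opp D : pf_wf D -> pf_wf (pf_opp D).
Proof.
move=> wfD _ /mapP[e eD ->]; have [em ei small_e] := wfD e eD; split=> //=.
by move=> _ /mapP[a ae ->]; rewrite size_polyN small_e.
Qed.

Lemma pf_sum_opp D : pf_sum (pf_opp D) = - pf_sum D.
Proof.
rewrite /pf_sum big_map -sumrN; apply: eq_bigr => e _ /=.
rewrite -sumrN size_map; apply: eq_bigr => j _.
by rewrite (nth_map_additive -%R) rmorphN mulNr.
Qed.

Lemma pf_coef_opp D u j : pf_coef (pf_opp D) u j = - pf_coef D u j.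
Proof.
rewrite /pf_coef big_map -sumrN; apply: eq_bigr => e _.
exact: (nth_map_additive -%R).
Qed.

Lemma pf_coef_unique p1 p2 D1 D2 : pf_wf D1 -> pf_wf D2 ->
  p1%:F + pf_sum D1 = p2%:F + pf_sum D2 -> pf_coef D1 =2 pf_coef D2.
Proof.
move=> wfD1 wfD2 D12 u j; apply/eqP; rewrite -subr_eq0 -pf_coef_opp.
have wfD : pf_wf (D1 ++ pf_opp D2).
  by move=> e; rewrite mem_cat => /orP[/wfD1|/(pf_wf_opp wfD2)].
have sum0 : (p1 - p2)%:F + pf_sum (D1 ++ pf_opp D2) = 0.
  by rewrite pf_sum_cat pf_sum_opp rmorphB addrACA D12 -opprD subrr.
by have := pf_coef_eq0 wfD sum0 u j; rewrite /pf_coef big_cat => ->.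
Qed.

Section EntrySums.
Variables (h : P -> P -> P) (i : nat).
Hypotheses (h0 : forall u, h u 0 = 0)
           (hD : forall u, {morph h u : a b / a + b}).

Lemma sum_pf_entries D U : uniq U -> {subset map fst D <= U} ->
  \sum_(e <- D) h e.1 (e.2`_i) = \sum_(u <- U) h u (pf_coef D u i).
Proof.
move=> uU DU; rewrite (sum_partition_keys _ (key := fst) uU); last first.
  by move=> e eD; apply/DU/map_f.
apply: eq_bigr => u _; rewrite /pf_coef (big_morph (h u) (hD u) (h0 u)).
by apply: eq_bigr => e /eqP ->.
Qed.

Lemma eq_sum_pf_entries D1 D2 : (forall u, pf_coef D1 u i = pf_coef D2 u i) ->
  \sum_(e <- D1) h e.1 (e.2`_i) = \sum_(e <- D2) h e.1 (e.2`_i).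
Proof.
move=> D12; set U := undup (map fst (D1 ++ D2)).
have [sub1 sub2] : {subset map fst D1 <= U} /\ {subset map fst D2 <= U}.
  by split=> u uD; rewrite mem_undup map_cat mem_cat uD ?orbT.
rewrite (sum_pf_entries (undup_uniq _) sub1).
rewrite (sum_pf_entries (undup_uniq _) sub2).
by apply: eq_bigr => u _; rewrite D12.
Qed.

End EntrySums.

Section PfMap.
Variables (psi psi' : {rmorphism F -> F}).
Hypothesis psiK : cancel psi' psi.

Definition pf_map D :=
  [seq (map_poly psi e.1, map (map_poly psi) e.2) | e <- D].

Lemma irredp_map p : irreducible_poly p -> irreducible_poly (map_poly psi p).
Proof.
move=> [p_gt1 p_irr]; split=> [|q]; first by rewrite size_map_poly.
have <- : map_poly psi (map_poly psi' q) = q.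
  by rewrite -map_poly_comp map_poly_id // => a _ /=; apply: psiK.
by rewrite size_map_poly dvdp_map eqp_map; apply: p_irr.
Qed.

Lemma pf_wf_map D : pf_wf D -> pf_wf (pf_map D).
Proof.
move=> wfD _ /mapP[e eD ->]; have [em ei small_e] := wfD e eD.
split=> /=; [by rewrite map_monic | exact: irredp_map |].
by move=> _ /mapP[a ae ->]; rewrite !size_map_poly small_e.
Qed.

Lemma uniq_pf_map D : uniq (map fst D) -> uniq (map fst (pf_map D)).
Proof.
have -> : map fst (pf_map D) = map (map_poly psi) (map fst D).
  by rewrite -!map_comp.
by rewrite (map_inj_uniq (@map_poly_inj _ _ psi)).
Qed.

Lemma pf_sum_map D :
  frac_map (map_poly psi) (pf_sum D) = pf_sum (pf_map D).
Proof.
have psi_inj := @map_poly_inj _ _ psi; pose Phi := frac_rmorph psi_inj.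
rewrite -[frac_map _ _]/(Phi (pf_sum D)) /pf_sum rmorph_sum big_map.
apply: eq_bigr => e _; rewrite rmorph_sum size_map; apply: eq_bigr => j _.
rewrite fmorph_div /= !frac_map_tofrac //.
by rewrite rmorphXn (nth_map_additive (map_poly psi)).
Qed.

End PfMap.
End PartialFractions.

(** * Residues under automorphisms of k(x) *)

Section Residues.
Variable k : fieldType.
Local Notation P := {poly KK k}.
Implicit Types (f : FF k) (p : P) (D : seq (P * seq P)).

Lemma is_pfdP f p D :
  is_pfd f p D <-> [/\ uniq (map fst D), pf_wf D & f = p%:F + pf_sum D].
Proof.
split=> [[uD irrD smallD fE]|[uD wfD fE]].
  by split=> // e eD; have [em ei] := irrD e eD; split=> //; apply: smallD.
by split=> // e eD; have [em ei smallD] := wfD e eD.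
Qed.

Lemma pfd_spec f : is_pfd f (pfd f).1 (pfd f).2.
Proof.
apply: (epsilon_spec _ (fun pD => is_pfd f pD.1 pD.2)).
by have [p [D decD]] := pf_exists f; exists (p, D); apply/is_pfdP.
Qed.

Lemma pfd_coef f p D : is_pfd f p D -> pf_coef (pfd f).2 =2 pf_coef D.
Proof.
move=> /is_pfdP[_ wfD fE]; have /is_pfdP[_ wf fE'] := pfd_spec f.
exact: pf_coef_unique wf wfD (etrans (esym fE') fE).
Qed.

Section Automorphism.
Variables (psi psi' : {rmorphism KK k -> KK k}).
Hypothesis psiK : cancel psi' psi.
Local Notation Phi := (frac_map (map_poly psi)).

Lemma pfd_map f p D :
  is_pfd f p D -> is_pfd (Phi f) (map_poly psi p) (pf_map psi D).
Proof.
move=> /is_pfdP[uD wfD fE]; apply/is_pfdP; split.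
- exact: uniq_pf_map.
- exact: pf_wf_map psiK _ wfD.
- rewrite -pf_sum_map -(frac_map_tofrac (@map_poly_inj _ _ psi)) fE.
  exact: (rmorphD (frac_rmorph (@map_poly_inj _ _ psi))).
Qed.

Lemma sum_pfd_map (h : P -> P -> P) i f :
  (forall u, h u 0 = 0) -> (forall u, {morph h u : a b / a + b}) ->
  (forall u c, h (map_poly psi u) (map_poly psi c) = map_poly psi (h u c)) ->
  \sum_(e <- (pfd (Phi f)).2) h e.1 (e.2`_i) =
  map_poly psi (\sum_(e <- (pfd f).2) h e.1 (e.2`_i)).
Proof.
move=> h0 hD h_map.
have coef_map u : pf_coef (pfd (Phi f)).2 u i = pf_coef (pf_map psi (pfd f).2) u i.
  exact: pfd_coef (pfd_map (pfd_spec f)) u i.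
rewrite (eq_sum_pf_entries h0 hD coef_map).
rewrite /pf_map big_map rmorph_sum; apply: eq_bigr => e _ /=.
by rewrite (nth_map_additive (map_poly psi)) h_map.
Qed.

Lemma map_monicize p : map_poly psi (monicize p) = monicize (map_poly psi p).
Proof. by rewrite /monicize map_polyZ fmorphV lead_coef_map. Qed.

Lemma map_sigy_pow l p :
  map_poly psi (sigy_pow l p) = sigy_pow l (map_poly psi p).
Proof. by rewrite /sigy_pow map_comp_poly map_polyXaddC rmorph_int. Qed.

Variable d : P.
Hypothesis psi_d : map_poly psi d = d.

Lemma res_Dy_map f : res_Dy (Phi f) d = map_poly psi (res_Dy f d).
Proof.
have psi_md : map_poly psi (monicize d) = monicize d.
  by rewrite map_monicize psi_d.
rewrite /res_Dy big_mkcond [in RHS]big_mkcond.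
pose h (u c : P) : P := if u == monicize d then c else 0.
apply: (sum_pfd_map (h := h)) => [u|u a b|u c]; rewrite /h.
- by case: ifP.
- by case: ifP; rewrite ?addr0.
- rewrite -{1}psi_md (inj_eq (@map_poly_inj _ _ psi)).
  by case: ifP; rewrite ?rmorph0.
Qed.

Lemma res_sigy_map f j : res_sigy (Phi f) d j = map_poly psi (res_sigy f d j).
Proof.
rewrite /res_sigy; case: (j == 0%N); first by rewrite rmorph0.
set md := monicize d.
have psi_sigy l : map_poly psi (sigy_pow l md) = sigy_pow l md.
  by rewrite map_sigy_pow map_monicize psi_d.
pose l_of (u : P) : int :=
  epsilon (inhabits 0%Z) (fun l : int => u = sigy_pow l md).
pose h (u c : P) : P :=
  if u == sigy_pow (l_of u) md then sigy_pow (- l_of u) c else 0.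
apply: (sum_pfd_map (h := h)) => [u|u a b|u c]; rewrite /h.
- by case: (u == _); [apply: comp_poly0 |].
- by case: (u == _); [apply: comp_polyD | rewrite addr0].
(* psi fixes every shift of d, so u and its image choose the same shift. *)
have -> : l_of (map_poly psi u) = l_of u.
  congr epsilon; apply: functional_extensionality => l.
  apply: propositional_extensionality.
  by split=> [|->]; [rewrite -{1}psi_sigy => /map_poly_inj | apply: psi_sigy].
rewrite -{1}(psi_sigy (l_of u)) (inj_eq (@map_poly_inj _ _ psi)).
by case: (u == _); rewrite ?rmorph0 ?map_sigy_pow.
Qed.

End Automorphism.
End Residues.

Lemma comp_polyK (R : comNzRingType) (r r' : {poly R}) :
  r \Po r' = 'X -> cancel (comp_poly r) (comp_poly r').
Proof. by move=> rK p; rewrite -comp_polyA rK comp_polyXr. Qed.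

Section Substitution.
Variables (k : fieldType) (r r' : {poly k}).
Hypotheses (rK : r \Po r' = 'X) (r'K : r' \Po r = 'X).

Let subst_inj := can_inj (comp_polyK rK).
Let subst'_inj := can_inj (comp_polyK r'K).
Let subst := frac_rmorph subst_inj.

Lemma frac_subst_can : cancel (frac_rmorph subst'_inj) subst.
Proof. exact: frac_map_can (comp_polyK r'K). Qed.

Lemma map_frac_subst_ky (d : {poly k}) :
  map_poly subst (ky_to_Ky d) = ky_to_Ky d.
Proof.
rewrite -map_poly_comp; apply: eq_map_poly => c /=.
by rewrite frac_map_tofrac //= comp_polyC.
Qed.

Lemma res_Dy_subst (f : FF k) (d : {poly k}) :
  res_Dy (frac_map (map_poly (frac_map (comp_poly r))) f) (ky_to_Ky d) =
  map_poly (frac_map (comp_poly r)) (res_Dy f (ky_to_Ky d)).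
Proof. exact: (res_Dy_map frac_subst_can (map_frac_subst_ky d) f). Qed.

Lemma res_sigy_subst (f : FF k) (d : {poly k}) j :
  res_sigy (frac_map (map_poly (frac_map (comp_poly r))) f) (ky_to_Ky d) j =
  map_poly (frac_map (comp_poly r)) (res_sigy f (ky_to_Ky d) j).
Proof. exact: (res_sigy_map frac_subst_can (map_frac_subst_ky d) f j). Qed.

End Substitution.

Theorem lemma1 (k : fieldType) (hk : [pchar k] =i pred0) (q : k) (hq : q != 0)
  (a b : {poly {poly k}}) (hb : b != 0) (d : {poly k})
  (hd : irreducible_poly d)
  (hdb : exists c : {poly {poly k}}, b = c * ky_to_kxy d) :
  let f := kxy_to_F a / kxy_to_F b in
  let dK := ky_to_Ky d in
  [/\ res_Dy (sigx f) dK = sigx_Ky (res_Dy f dK),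
      res_Dy (taux q f) dK = taux_Ky q (res_Dy f dK) &
      forall j : nat, res_sigy (taux q f) dK j = taux_Ky q (res_sigy f dK j)].
Proof.
move=> f dK.
have shiftK : ('X + 1) \Po ('X - 1) = 'X :> {poly k}.
  by rewrite comp_polyD comp_polyX -polyC1 comp_polyC subrK.
have shiftK' : ('X - 1) \Po ('X + 1) = 'X :> {poly k}.
  by rewrite comp_polyB comp_polyX -polyC1 comp_polyC addrK.
have scaleK : (q *: 'X) \Po (q^-1 *: 'X) = 'X :> {poly k}.
  by rewrite comp_polyZ comp_polyX scalerA mulfV // scale1r.
have scaleK' : (q^-1 *: 'X) \Po (q *: 'X) = 'X :> {poly k}.
  by rewrite comp_polyZ comp_polyX scalerA mulVf // scale1r.
split.
- exact: res_Dy_subst shiftK shiftK' f d.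
- exact: res_Dy_subst scaleK scaleK' f d.
- by move=> j; exact: res_sigy_subst scaleK scaleK' f d j.
Qed.
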